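(* Let $\{V_0(n)\}_{n\in\mathbb{Z}}$ be a real-valued sequence and let $\psi_1,\dots,\psi_k$ be sequences satisfying $$\big(-\bigtriangleup^2+V_0(n)\big)\psi_i(n)=\epsilon_i\,\psi_i(n+2),\qquad i=1,\dots,k,$$ for pairwise different real constants $\epsilon_1,\dots,\epsilon_k$, and assume the Casoratians $C(\psi_1,\dots,\psi_j)(n)$ are nonzero for all $n$ and $j=1,\dots,k$. Define recursively, for $i=1,\dots,k$, $$\hat\psi_i(n)=\big(-\bigtriangleup+f_{i-1}(n)\big)\cdots\big(-\bigtriangleup+f_1(n)\big)\psi_i(n),\qquad f_i(n)=\frac{\bigtriangleup\hat\psi_i(n)}{\hat\psi_i(n)},$$ $$V_i(n)=V_{i-1}(n+1)-2\bigtriangleup f_i(n+1)$$ (with $\hat\psi_1=\psi_1$; the $f_j(n)$ act as multiplication operators). Then for $i=1,\dots,k$: $$\hat\psi_i(n)=(-1)^{i-1}\frac{C(\psi_1,\dots,\psi_i)(n)}{C(\psi_1,\dots,\psi_{i-1})(n)},\qquad \big(-\bigtriangleup^2+V_{i-1}(n)\big)\hat\psi_i(n)=\epsilon_i\,\hat\psi_i(n+2),$$ $$f_j(n)=\frac{C(\psi_1,\dots,\psi_{j-1})(n)}{C(\psi_1,\dots,\psi_{j-1})(n+1)}\cdot\frac{C(\psi_1,\dots,\psi_j)(n+1)}{C(\psi_1,\dots,\psi_j)(n)}-1,$$ and $$V_i(n)=V_0(n+i)-2\bigtriangleup\big(f_1(n+i)+f_2(n+i-1)+\dots+f_i(n+1)\big)=V_0(n+i)-2\bigtriangleup\frac{D_i(n)}{C(\psi_1,\dots,\psi_i)(n+1)},$$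 where $D_i(n)$ is the $i\times i$ determinant whose columns are indexed by $\psi_1,\dots,\psi_i$ and whose rows are the values at $n+1,n+2,\dots,n+i-1,n+i+1$, i.e. $D_i(n)=\det\big(\psi_c(n+r_\ell)\big)_{\ell,c=1}^{i}$ with $(r_1,\dots,r_i)=(1,2,\dots,i-1,i+1)$.
   Context: For a sequence $\psi:\mathbb{Z}\to\mathbb{C}$, $\bigtriangleup\psi(n)=\psi(n+1)-\psi(n)$ and $\bigtriangleup^2\psi(n)=\psi(n+2)-2\psi(n+1)+\psi(n)$. The Casoratian of sequences $\psi_1,\dots,\psi_m$ is $C(\psi_1,\dots,\psi_m)(n)=\det\big(\psi_c(n+r-1)\big)_{r,c=1}^{m}$ (rows $n,n+1,\dots,n+m-1$), with the empty Casoratian $C()(n)=1$. *)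

From HB Require Import structures.
From mathcomp Require Import all_boot all_order all_algebra.
From mathcomp Require Import complex.
From mathcomp Require Import reals.
Set Implicit Arguments. Unset Strict Implicit. Unset Printing Implicit Defensive.
Import Order.TTheory GRing.Theory Num.Theory.
Local Open Scope ring_scope.

Section Defs.
Variable R : realType.
Local Notation C := (R[i]).

Definition delta (g : int -> C) (n : int) : C := g (n + 1) - g n.
Definition delta2 (g : int -> C) (n : int) : C := g (n + 2) - 2 * g (n + 1) + g n.

(* Sequences are indexed 1..k: psi 1, ..., psi k  (psi 0 is unused). *)
(* Casoratian C(psi_1,...,psi_m)(n) = det (psi_{c}(n + r - 1))_{r,c=1..m};
   for m = 0 this is the determinant of the empty matrix, i.e. 1. *)
Definition casoratian (psi : nat -> int -> C) (m : nat) (n : int) : C :=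
  \det (\matrix_(r < m, c < m) psi c.+1 (n + (r : nat)%:Z)).

(* D_i(n): rows at n+1, ..., n+i-1, n+i+1 *)
Definition Dmat (psi : nat -> int -> C) (i : nat) (n : int) : C :=
  \det (\matrix_(l < i, c < i)
          psi c.+1 (n + (if ((l : nat).+1 < i)%N then (l : nat).+1 else i.+1)%:Z)).

Definition dop (f g : int -> C) : int -> C := fun n => - delta g n + f n * g n.

(* apply (-Delta + f_j) ... (-Delta + f_1) to g, given fs = [:: f_1; ...; f_j] *)
Definition apply_ops (fs : seq (int -> C)) (g : int -> C) : int -> C :=
  foldl (fun h f => dop f h) g fs.

Fixpoint fseq (psi : nat -> int -> C) (j : nat) : seq (int -> C) :=
  match j with
  | 0 => [::]
  | j'.+1 =>
      let prev := fseq psi j' in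
      let h := apply_ops prev (psi j'.+1) in
      rcons prev (fun n => delta h n / h n)
  end.

Definition hatpsi (psi : nat -> int -> C) (i : nat) : int -> C :=
  apply_ops (fseq psi i.-1) (psi i).

(* f_j = Delta hat psi_j / hat psi_j   (j >= 1) *)
Definition fcoef (psi : nat -> int -> C) (j : nat) : int -> C :=
  nth (fun _ => 0) (fseq psi j) j.-1.

Fixpoint Vpot (psi : nat -> int -> C) (V0 : int -> C) (i : nat) : int -> C :=
  match i with
  | 0 => V0
  | i'.+1 => fun n => Vpot psi V0 i' (n + 1) - 2 * delta (fcoef psi i) (n + 1)
  end.

End Defs.

From HB Require Import structures.
From mathcomp Require Import all_boot all_order all_algebra.
From mathcomp Require Import complex.
From mathcomp Require Import reals.
From mathcomp Require Import ring zify.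
Set Implicit Arguments. Unset Strict Implicit. Unset Printing Implicit Defensive.
Import Order.TTheory GRing.Theory Num.Theory.
Local Open Scope ring_scope.

(* Each step is a discrete Darboux transformation: if h solves
   (-Delta^2 + V) h = e h(. + 2) and never vanishes, then g |-> (-Delta + Delta h / h) g
   maps solutions of the same equation for V to solutions for the potential
   V(n + 1) - 2 Delta (Delta h / h)(n + 1), with the same eigenvalue.  Iterating it,
   hat psi_i = +-C(psi_1..psi_i)/C(psi_1..psi_(i-1)) follows by induction from the
   Desnanot-Jacobi identity for Casoratians, itself a consequence of Jacobi's theorem on
   the minors of the adjugate.  The formulas for f_j and V_i follow by telescoping, and
   the form with D_i from one more Desnanot-Jacobi identity, since D_i(n) is, up to sign,
   the Casoratian at n + 1 of psi_1, ..., psi_i and the indicator sequence of n + i. *)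

Lemma det_mx22 (R : comNzRingType) (A : 'M[R]_2) : \det A = A 0 0 * A 1 1 - A 0 1 * A 1 0.
Proof.
rewrite (expand_det_row _ 0) !big_ord_recl big_ord0 /cofactor !det_mx11 !mxE.
have l01 : lift 0 (0 : 'I_1) = 1 :> 'I_2 by apply: val_inj.
have l11 : lift 1 (0 : 'I_1) = 0 :> 'I_2 by apply: val_inj.
by rewrite /= expr0 expr1 l01 l11 mul1r mulN1r addr0 mulrN.
Qed.

Lemma det_ulsubmx_adj_mul (R : comNzRingType) p (M : 'M[R]_(2 + p)) :
  \det M * \det (ulsubmx (\adj M)) = \det M ^+ 2 * \det (drsubmx M).
Proof.
pose X : 'M[R]_(2 + p) := row_mx (lsubmx (\adj M)) (col_mx 0 1%:M).
have detX : \det X = \det (ulsubmx (\adj M)).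
  rewrite /X -[lsubmx _]vsubmxK -block_mxEh det_lblock det1 mulr1.
  by congr (\det _); apply/matrixP => i j; rewrite !mxE.
have MX : M *m X = row_mx (col_mx (\det M)%:M 0) (rsubmx M).
  rewrite /X mul_mx_row mulmx_lsub mul_mx_adj (scalar_mx_block 2 p) block_mxEh row_mxKl.
  by rewrite -[M in M *m _]hsubmxK mul_row_col mulmx0 add0r mulmx1.
rewrite -detX -det_mulmx MX -[rsubmx M]vsubmxK -block_mxEh det_ublock det_scalar.
have -> : dsubmx (rsubmx M) = drsubmx M by apply/matrixP => i j; rewrite !mxE.
by rewrite mulrC.
Qed.

Lemma det_ulsubmx_adj (R : comNzRingType) p (M : 'M[R]_(2 + p)) :
  \det (ulsubmx (\adj M)) = \det M * \det (drsubmx M).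
Proof.
(* 'X + M has a monic, hence regular, determinant, and specialises to M at 'X = 0. *)
pose N := char_poly_mx (- M).
have /monic_lreg regN : \det N \is monic := char_poly_monic _.
have HN : \det (ulsubmx (\adj N)) = \det N * \det (drsubmx N).
  by apply: regN; rewrite /= det_ulsubmx_adj_mul expr2 mulrA.
have NM : map_mx (horner_eval 0) N = M.
  apply/matrixP => i j; rewrite !mxE /horner_eval.
  by case: (i == j); rewrite /= ?hornerE ?mxE ?opprK.
have := congr1 (horner_eval 0) HN.
by rewrite rmorphM /= -!det_map_mx map_ulsubmx map_mx_adj map_drsubmx NM.
Qed.

Definition sqmx (R : Type) m (F : nat -> nat -> R) : 'M[R]_m := \matrix_(i < m, j < m) F i j.

Lemma eq_sqmx (R : Type) m (F G : nat -> nat -> R) :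
  (forall i j, (i < m)%N -> (j < m)%N -> F i j = G i j) -> sqmx m F = sqmx m G.
Proof. by move=> eFG; apply/matrixP => i j; rewrite !mxE eFG. Qed.

Lemma sqmx_minor (R : Type) m (F : nat -> nat -> R) (i j : 'I_m.+1) :
  row' i (col' j (sqmx m.+1 F)) = sqmx m (fun r c => F (bump i r) (bump j c)).
Proof. by apply/matrixP => r c; rewrite !mxE. Qed.

Lemma trmx_sqmx (R : Type) m (F : nat -> nat -> R) :
  (sqmx m F)^T = sqmx m (fun i j => F j i).
Proof. by apply/matrixP => i j; rewrite !mxE. Qed.

Lemma desnanot_jacobi_sqmx (R : comNzRingType) p (F : nat -> nat -> R) :
  \det (sqmx p.+2 F) * \det (sqmx p (fun i j => F i.+2 j.+2)) =
  \det (sqmx p.+1 (fun i j => F i.+1 j.+1))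
    * \det (sqmx p.+1 (fun i j => F (bump 1 i) (bump 1 j)))
  - \det (sqmx p.+1 (fun i j => F (bump 1 i) j.+1))
    * \det (sqmx p.+1 (fun i j => F i.+1 (bump 1 j))).
Proof.
have := det_ulsubmx_adj (sqmx (2 + p) F).
rewrite det_mx22 !mxE /cofactor !sqmx_minor /=.
have -> : drsubmx (sqmx (2 + p) F) = sqmx p (fun i j => F i.+2 j.+2).
  by apply/matrixP => i j; rewrite !mxE.
rewrite (modn_small (isT : (1 < 2)%N)) => <-; ring.
Qed.

Lemma bump_small h i : (i < h)%N -> bump h i = i.
Proof. by move=> lt_ih; rewrite /bump leqNgt lt_ih. Qed.

Definition cpred m i := if i is i'.+1 then i' else m.

Lemma bump_cpred m i : (i <= m)%N -> bump m (cpred m i) = cpred m.+1 i.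
Proof. by case: i => [|i] le_im /=; [rewrite /bump leqnn | rewrite bump_small]. Qed.

Lemma det_sqmx_cpred_row (R : comNzRingType) m (F : nat -> nat -> R) :
  \det (sqmx m.+1 (fun i j => F (cpred m i) j)) = (-1) ^+ m * \det (sqmx m.+1 F).
Proof.
rewrite (expand_det_row _ ord0) (expand_det_row _ ord_max) mulr_sumr.
apply: eq_bigr => j _; rewrite /cofactor !sqmx_minor !mxE.
rewrite (@eq_sqmx _ m (fun r c => F (bump (@ord_max m) r) (bump j c))
                      (fun r c => F (cpred m (bump (@ord0 m) r)) (bump j c))).
  by rewrite !exprD expr0 mul1r -!mulrA [RHS]mulrCA signrMK.
by move=> r c lt_rm _; rewrite bump_small.
Qed.

Lemma det_sqmx_cpred_col (R : comNzRingType) m (F : nat -> nat -> R) :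
  \det (sqmx m.+1 (fun i j => F i (cpred m j))) = (-1) ^+ m * \det (sqmx m.+1 F).
Proof.
by rewrite -det_tr trmx_sqmx (det_sqmx_cpred_row m (fun i j => F j i)) -trmx_sqmx det_tr.
Qed.

Definition casorati_mx (R : Type) (s : nat -> int -> R) m n : 'M[R]_m :=
  sqmx m (fun i j => s j (n + i%:Z)).

Lemma desnanot_jacobi_casorati (R : comNzRingType) (s : nat -> int -> R) p n :
  \det (casorati_mx s p.+2 n) * \det (casorati_mx s p (n + 1)) =
  \det (casorati_mx s p.+1 n) * \det (casorati_mx (s \o bump p) p.+1 (n + 1))
  - \det (casorati_mx (s \o bump p) p.+1 n) * \det (casorati_mx s p.+1 (n + 1)).
Proof.
(* Reorder rows as n + p + 1, n, n + 1, ..., n + p and columns as p, p + 1, 0, ..., p - 1,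
   so that the two distinguished rows and columns come first. *)
pose F i j := s (cpred p.+1 (cpred p.+1 j)) (n + (cpred p.+1 i)%:Z).
have dF : \det (sqmx p.+2 F) = (-1) ^+ p.+1 * \det (casorati_mx s p.+2 n).
  rewrite (det_sqmx_cpred_row p.+1 (fun i j => s (cpred p.+1 (cpred p.+1 j)) (n + i%:Z))).
  rewrite (det_sqmx_cpred_col p.+1 (fun i j => s (cpred p.+1 j) (n + i%:Z))).
  by rewrite (det_sqmx_cpred_col p.+1 (fun i j => s j (n + i%:Z))) signrMK.
have d22 : sqmx p (fun i j => F i.+2 j.+2) = casorati_mx s p (n + 1).
  by apply: eq_sqmx => i j _ _; rewrite /F /=; congr (s _ _); lia.
have d00 : \det (sqmx p.+1 (fun i j => F i.+1 j.+1))
           = (-1) ^+ p * \det (casorati_mx (s \o bump p) p.+1 n).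
  rewrite -det_sqmx_cpred_col; congr (\det _).
  by apply: eq_sqmx => i j _ lt_jp; rewrite /= bump_cpred.
have d11 : \det (sqmx p.+1 (fun i j => F (bump 1 i) (bump 1 j)))
           = \det (casorati_mx s p.+1 (n + 1)).
  rewrite -[RHS](signrMK p) -det_sqmx_cpred_col -det_sqmx_cpred_row.
  congr (\det _); apply: eq_sqmx => [] [|i] [|j] _ _;
    by rewrite /F /bump /=; congr (s _ _); lia.
have d10 : \det (sqmx p.+1 (fun i j => F (bump 1 i) j.+1))
           = \det (casorati_mx (s \o bump p) p.+1 (n + 1)).
  rewrite -[RHS](signrMK p) -det_sqmx_cpred_col -det_sqmx_cpred_row.
  congr (\det _); apply: eq_sqmx => [] [|i] j _ lt_jp;
    by rewrite /= bump_cpred // /F /bump /=; congr (s _ _); lia.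
have d01 : \det (sqmx p.+1 (fun i j => F i.+1 (bump 1 j)))
           = (-1) ^+ p * \det (casorati_mx s p.+1 n).
  rewrite -det_sqmx_cpred_col; congr (\det _).
  by apply: eq_sqmx => i [|j] _ _; rewrite /F /bump /=; congr (s _ _); lia.
have := desnanot_jacobi_sqmx p F.
rewrite dF d22 d00 d11 d10 d01 => DJ.
apply: (@lreg_sign _ p.+1); rewrite mulrA DJ exprS; ring.
Qed.

Lemma det_sqmx_unit_col (R : comNzRingType) m q (F : nat -> nat -> R) :
  (q <= m)%N -> (forall i, (i <= m)%N -> F i m = (i == q)%:R) ->
  \det (sqmx m.+1 F) = (-1) ^+ (q + m) * \det (sqmx m (fun i j => F (bump q i) j)).
Proof.
move=> le_qm Fm; rewrite (expand_det_col _ ord_max) (bigD1 (inord q)) //=.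
rewrite big1 => [|i neq_iq]; last first.
  have le_im : (i <= m)%N by rewrite -ltnS.
  rewrite mxE Fm // (_ : (i == q :> nat) = false) ?mul0r //.
  by apply: contraNF neq_iq => /eqP iq; apply/eqP/val_inj; rewrite /= inordK.
rewrite mxE Fm inordK ?ltnS // eqxx mul1r addr0 /cofactor sqmx_minor inordK ?ltnS //.
congr (_ * \det _); apply: eq_sqmx => i j _ lt_jm.
by rewrite (bump_small lt_jm).
Qed.

Lemma eq_casorati_mx (R : Type) (s s' : nat -> int -> R) m n :
  (forall j, (j < m)%N -> s j = s' j) -> casorati_mx s m n = casorati_mx s' m n.
Proof. by move=> ss'; apply: eq_sqmx => i j _ lt_jm; rewrite ss'. Qed.

Lemma det_casorati_indicator (R : comNzRingType) (s : nat -> int -> R) m n q :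
  (q <= m)%N -> s m = (fun t => (t == n + q%:Z)%:R) ->
  \det (casorati_mx s m.+1 n)
  = (-1) ^+ (q + m) * \det (sqmx m (fun i j => s j (n + (bump q i)%:Z))).
Proof.
move=> le_qm sm; rewrite (@det_sqmx_unit_col _ m q) // => i _.
by rewrite sm (inj_eq (addrI n)) eqz_nat.
Qed.

Lemma addz11 (n : int) : n + 1 + 1 = n + 2.
Proof. by rewrite -addrA. Qed.

Lemma sign_addnn (R : pzRingType) q : (-1) ^+ (q + q) = 1 :> R.
Proof. by rewrite addnn -signr_odd odd_double. Qed.

Lemma sign_addnSn (R : pzRingType) q : (-1) ^+ (q + q.+1) = -1 :> R.
Proof. by rewrite addnS exprS sign_addnn mulr1. Qed.

Section Crum.
Variable R : realType.
Local Notation C := R[i].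

Definition eigensol (V : int -> C) (e : C) (g : int -> C) :=
  forall n, - delta2 g n + V n * g n = e * g (n + 2).

Definition logdelta (h : int -> C) n := delta h n / h n.

Lemma darboux_step (V : int -> C) (h g : int -> C) (eh eg : C) :
  (forall n, h n != 0) -> eigensol V eh h -> eigensol V eg g ->
  eigensol (fun n => V (n + 1) - 2 * delta (logdelta h) (n + 1)) eg (dop (logdelta h) g).
Proof.
move=> h_neq0 Eh Eg n.
have shift3 : n + 2 + 1 = n + 3 by rewrite -addrA.
have shift3' : n + 1 + 2 = n + 3 by rewrite -addrA.
move: (Eh n) (Eh (n + 1)) (Eg n) (Eg (n + 1)) (h_neq0 n) (h_neq0 (n + 1)) (h_neq0 (n + 2)).
rewrite /dop /logdelta /delta2 /delta !addz11 !shift3 !shift3'.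
move: (h n) (h (n + 1)) (h (n + 2)) (h (n + 3)) (g n) (g (n + 1)) (g (n + 2)) (g (n + 3)).
move: (V n) (V (n + 1)) => V0 V1 h0 h1 h2 h3 g0 g1 g2 g3 Eh0 Eh1 Eg0 Eg1 nz0 nz1 nz2.
apply/eqP; rewrite -subr_eq0; apply/eqP.
(* The defect is a combination of the four eigen-equations. *)
transitivity (- (- (g3 - 2 * g2 + g1) + V1 * g1 - eg * g3)
              + h3 / h2 * (- (g2 - 2 * g1 + g0) + V0 * g0 - eg * g2)
              + g0 / h0 * (- (h3 - 2 * h2 + h1) + V1 * h1 - eh * h3
                           - h3 / h2 * (- (h2 - 2 * h1 + h0) + V0 * h0 - eh * h2))).
  by field; rewrite nz0 nz1 nz2.
by rewrite Eh0 Eh1 Eg0 Eg1 !subrr; ring.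
Qed.

Variable psi : nat -> int -> C.

Lemma size_fseq j : size (fseq psi j) = j.
Proof. by elim: j => //= j IHj; rewrite size_rcons IHj. Qed.

Lemma fcoefS j : fcoef psi j.+1 = logdelta (hatpsi psi j.+1).
Proof. by rewrite /fcoef /= nth_rcons size_fseq ltnn eqxx. Qed.

Lemma apply_ops_fseqS j g :
  apply_ops (fseq psi j.+1) g = dop (fcoef psi j.+1) (apply_ops (fseq psi j) g).
Proof. by rewrite fcoefS /apply_ops /= foldl_rcons. Qed.

Lemma casoratianE m n : casoratian psi m n = \det (casorati_mx (fun j => psi j.+1) m n).
Proof. by []. Qed.

Lemma casoratian0 n : casoratian psi 0 n = 1.
Proof. exact: det_mx00. Qed.

Lemma DmatE i n :
  Dmat psi i n = \det (sqmx i (fun l j => psi j.+1 (n + 1 + (bump i.-1 l)%:Z))).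
Proof.
congr (\det _); apply/matrixP => l j; rewrite !mxE; congr (psi _ _).
have lt_li := ltn_ord l; rewrite /bump.
by case: (ltnP l.+1 i) => ?; case: (leqP i.-1 l) => ? /=; lia.
Qed.

Lemma Dmat_plucker q m :
  Dmat psi q.+2 m * casoratian psi q.+1 (m + 2) =
  Dmat psi q.+1 (m + 1) * casoratian psi q.+2 (m + 1)
  + casoratian psi q.+1 (m + 1) * casoratian psi q.+2 (m + 2).
Proof.
pose s j := if (j < q.+2)%N then psi j.+1 else fun t => (t == m + (q.+2)%:Z)%:R.
have cas_s l t : (l <= q.+2)%N -> \det (casorati_mx s l t) = casoratian psi l t.
  move=> le_l; rewrite casoratianE; congr (\det _); apply: eq_casorati_mx => j lt_jl.
  by rewrite /s (leq_trans lt_jl le_l).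
have ind1 : s q.+2 = (fun t => (t == m + 1 + (q.+1)%:Z)%:R).
  by rewrite /s ltnn (_ : m + 1 + _ = m + (q.+2)%:Z) //; lia.
have ind2 : (s \o bump q.+1) q.+1 = (fun t => (t == m + 2 + q%:Z)%:R).
  by rewrite /= /bump leqnn /s ltnn (_ : m + 2 + _ = m + (q.+2)%:Z) //; lia.
have ind3 : (s \o bump q.+1) q.+1 = (fun t => (t == m + 1 + (q.+1)%:Z)%:R).
  by rewrite /= /bump leqnn ind1.
have X1 : \det (casorati_mx s q.+3 (m + 1)) = - Dmat psi q.+2 m.
  rewrite (det_casorati_indicator _ ind1) // sign_addnSn mulN1r DmatE.
  by congr (- \det _); apply: eq_sqmx => i j _ lt_jq; rewrite /s lt_jq.
have X4 : \det (casorati_mx (s \o bump q.+1) q.+2 (m + 2)) = - Dmat psi q.+1 (m + 1).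
  rewrite (det_casorati_indicator _ ind2) // sign_addnSn mulN1r DmatE.
  congr (- \det _); apply: eq_sqmx => i j _ lt_jq.
  rewrite /= bump_small // /s ltnS (ltnW lt_jq); congr (psi _ _); lia.
have X5 : \det (casorati_mx (s \o bump q.+1) q.+2 (m + 1)) = casoratian psi q.+1 (m + 1).
  rewrite (det_casorati_indicator _ ind3) // sign_addnn mul1r casoratianE.
  congr (\det _); apply: eq_sqmx => i j lt_iq lt_jq.
  by rewrite /= !bump_small // /s ltnS (ltnW lt_jq).
have := desnanot_jacobi_casorati s q.+1 (m + 1).
rewrite addz11 X1 X4 X5 !cas_s // => DJ.
by apply: oppr_inj; rewrite -mulNr DJ; ring.
Qed.

Definition fcoef_sum i m := \sum_(1 <= j < i.+1) fcoef psi j (m + (i.+1 - j)%N%:Z).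

Lemma fcoef_sumS i m : fcoef_sum i.+1 m = fcoef_sum i (m + 1) + fcoef psi i.+1 (m + 1).
Proof.
rewrite /fcoef_sum big_nat_recr //= subSnn; congr (_ + _).
by apply: eq_big_nat => j /andP [_ lt_ji]; congr (fcoef _ _ _); lia.
Qed.

Lemma Vpot_fcoef_sum V0 i n : Vpot psi V0 i n = V0 (n + i%:Z) - 2 * delta (fcoef_sum i) n.
Proof.
elim: i n => [|i IHi] n.
  by rewrite /= /delta /fcoef_sum !big_geq // subrr mulr0 subr0 addr0.
rewrite /= IHi /delta !fcoef_sumS.
have -> : n + 1 + i%:Z = n + (i.+1)%:Z by lia.
ring.
Qed.

Definition bordered j i c := if (c < j)%N then psi c.+1 else psi i.

Lemma casorati_bordered j i l n : (l <= j)%N ->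
  \det (casorati_mx (bordered j i) l n) = casoratian psi l n.
Proof.
move=> le_lj; rewrite casoratianE; congr (\det _); apply: eq_casorati_mx => c lt_cl.
by rewrite /bordered (leq_trans lt_cl le_lj).
Qed.

Lemma casorati_bordered_next j n :
  \det (casorati_mx (bordered j j.+1) j.+1 n) = casoratian psi j.+1 n.
Proof.
rewrite casoratianE; congr (\det _); apply: eq_casorati_mx => c lt_cj.
by rewrite /bordered; case: ltnP => // le_jc; have -> : c = j by lia.
Qed.

Variable k : nat.
Hypothesis casoratian_neq0 : forall j, (1 <= j <= k)%N -> forall n, casoratian psi j n != 0.

Lemma casoratian_neq0_le j n : (j <= k)%N -> casoratian psi j n != 0.
Proof. by case: j => [|j] le_jk; rewrite ?casoratian0 ?oner_neq0 ?casoratian_neq0. Qed.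

Lemma apply_ops_casoratian j i n : (j < i)%N -> (j <= k)%N ->
  apply_ops (fseq psi j) (psi i) n
  = (-1) ^+ j * (\det (casorati_mx (bordered j i) j.+1 n) / casoratian psi j n).
Proof.
elim: j i n => [|j IHj] i n lt_ji le_jk.
  by rewrite casoratian0 divr1 mul1r /casorati_mx det_mx11 mxE addr0.
have hatE t : hatpsi psi j.+1 t
              = (-1) ^+ j * (casoratian psi j.+1 t / casoratian psi j t).
  by rewrite /hatpsi IHj ?casorati_bordered_next //; lia.
rewrite apply_ops_fseqS fcoefS /dop /logdelta /delta !hatE !IHj; try lia.
have bump_bordered t : \det (casorati_mx (bordered j.+1 i \o bump j) j.+1 t)
                       = \det (casorati_mx (bordered j i) j.+1 t).
  congr (\det _); apply: eq_casorati_mx => c lt_cj; rewrite /= /bordered.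
  case: (ltnP c j) => [lt_cj'|le_jc]; first by rewrite bump_small // ltnS ltnW.
  have -> : c = j by lia.
  by rewrite /bump leqnn ltnn.
have := desnanot_jacobi_casorati (bordered j.+1 i) j n.
rewrite (@casorati_bordered j.+1 i j) // !(@casorati_bordered j.+1 i j.+1) //.
rewrite !bump_bordered => DJ.
have Cj0 := casoratian_neq0_le n (ltnW le_jk).
have Cj1 := casoratian_neq0_le (n + 1) (ltnW le_jk).
have Cj'0 := casoratian_neq0_le n le_jk.
have sign_neq0 : (-1) ^+ j != 0 :> C by rewrite signr_eq0.
rewrite -(mulfK Cj1 (\det (casorati_mx (bordered j.+1 i) j.+2 n))) DJ exprS.
by field; rewrite Cj0 Cj1 Cj'0 sign_neq0.
Qed.

Lemma hatpsiS_casoratian j n : (j < k)%N ->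
  hatpsi psi j.+1 n = (-1) ^+ j * (casoratian psi j.+1 n / casoratian psi j n).
Proof. by move=> lt_jk; rewrite /hatpsi apply_ops_casoratian ?casorati_bordered_next // ltnW. Qed.

Lemma hatpsi_neq0 j n : (j < k)%N -> hatpsi psi j.+1 n != 0.
Proof.
move=> lt_jk; rewrite hatpsiS_casoratian // !mulf_neq0 ?signr_eq0 ?invr_eq0 //.
  exact: casoratian_neq0_le.
exact/casoratian_neq0_le/ltnW.
Qed.

Lemma fcoefS_casoratian j n : (j < k)%N ->
  fcoef psi j.+1 n = casoratian psi j n / casoratian psi j (n + 1)
                     * (casoratian psi j.+1 (n + 1) / casoratian psi j.+1 n) - 1.
Proof.
move=> lt_jk; rewrite fcoefS /logdelta /delta !hatpsiS_casoratian //.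
have := casoratian_neq0_le n (ltnW lt_jk); have := casoratian_neq0_le (n + 1) (ltnW lt_jk).
have := casoratian_neq0_le n lt_jk; have sign_neq0 : (-1) ^+ j != 0 :> C by rewrite signr_eq0.
by move=> C'0 C1 C0; field; rewrite C'0 C1 C0 sign_neq0.
Qed.

Lemma fcoef_sum_Dmat i m : (i < k)%N ->
  fcoef_sum i.+1 m = Dmat psi i.+1 m / casoratian psi i.+1 (m + 1) - i.+1%:R.
Proof.
elim: i m => [|i IHi] m lt_ik.
  rewrite fcoef_sumS /fcoef_sum big_geq // add0r fcoefS_casoratian // !casoratian0 !casoratianE.
  by rewrite /Dmat /casorati_mx !det_mx11 !mxE divr1 mul1r /= !addr0 addz11.
rewrite fcoef_sumS IHi 1?ltnW // fcoefS_casoratian // addz11.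
have C1 := casoratian_neq0_le (m + 2) (ltnW lt_ik).
have C2 := casoratian_neq0_le (m + 1) lt_ik.
rewrite -[Dmat psi i.+2 m](mulfK C1) Dmat_plucker -!natr1.
by field; rewrite C1 C2.
Qed.

Lemma eigensol_apply_ops (V0 : int -> C) (eps : nat -> C) :
  (forall i, (1 <= i <= k)%N -> eigensol V0 (eps i) (psi i)) ->
  forall j i, (j < i)%N -> (i <= k)%N ->
  eigensol (Vpot psi V0 j) (eps i) (apply_ops (fseq psi j) (psi i)).
Proof.
move=> eig_psi; elim=> [|j IHj] i lt_ji le_ik; first by apply: eig_psi; rewrite lt_ji.
rewrite apply_ops_fseqS /= fcoefS.
apply: darboux_step (IHj _ _ _) (IHj _ _ _) => //; try lia.
by move=> n; apply: hatpsi_neq0; lia.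
Qed.

End Crum.

Theorem theorem4 (R : realType) (k : nat) (V0 : int -> R[i])
    (psi : nat -> int -> R[i]) (eps : nat -> R[i])
    (hV0 : forall n, V0 n \is Num.real)
    (heps_real : forall i, (1 <= i <= k)%N -> eps i \is Num.real)
    (heps_inj : forall i j, (1 <= i <= k)%N -> (1 <= j <= k)%N ->
                  i <> j -> eps i <> eps j)
    (heq : forall i, (1 <= i <= k)%N -> forall n : int,
       - delta2 (psi i) n + V0 n * psi i n = eps i * psi i (n + 2))
    (hcas : forall j, (1 <= j <= k)%N -> forall n : int, casoratian psi j n != 0) :
  forall i, (1 <= i <= k)%N -> forall n : int,
    [/\ hatpsi psi i n
          = (-1) ^+ i.-1 * (casoratian psi i n / casoratian psi i.-1 n),
        - delta2 (hatpsi psi i) n + Vpot psi V0 i.-1 n * hatpsi psi i n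
          = eps i * hatpsi psi i (n + 2),
        fcoef psi i n
          = casoratian psi i.-1 n / casoratian psi i.-1 (n + 1)
            * (casoratian psi i (n + 1) / casoratian psi i n) - 1,
        Vpot psi V0 i n
          = V0 (n + i%:Z)
            - 2 * delta (fun m => \sum_(1 <= j < i.+1) fcoef psi j (m + (i.+1 - j)%N%:Z)) n
      & Vpot psi V0 i n
          = V0 (n + i%:Z)
            - 2 * delta (fun m => Dmat psi i m / casoratian psi i (m + 1)) n].
Proof.
move=> [//|i] /andP[_ lt_ik] n; split.
- exact: (hatpsiS_casoratian hcas).
- exact: (eigensol_apply_ops hcas heq).
- exact: (fcoefS_casoratian hcas).
- exact: Vpot_fcoef_sum.
- rewrite Vpot_fcoef_sum /delta !(fcoef_sum_Dmat hcas) //; ring.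
Qed.
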